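(* For every rooted tree $T$ (rooted at $s$) which is a subgraph of the network graph and in which every vertex knows its parent and children, there is a CONGEST algorithm with $\widetilde{O}(D(T))$ rounds and $\widetilde{O}(1)$ congestion at the end of which every vertex $v$ of $T$ knows its heavy/light classification in $T$ and its compressed path $\pi^*(s,v,T)$.
   Context: CONGEST model: synchronous rounds, each vertex has a unique $O(\log n)$-bit ID and may send an $O(\log n)$-bit message to each neighbour per round; $\widetilde{O}$ hides polylog$(n)$ factors; congestion is the maximum total number of messages sent over an edge. $D(T)$ is the diameter of $T$. For a non-leaf vertex $v$ of the rooted tree $T$, its heavy child is the child $v'$ maximizing the number of vertices of the subtree $T_{v'}$ (ties broken arbitrarily but consistently); other children are light children. A vertex is heavy if it is a heavy child and light otherwise (the root is light). For a vertex $v$, let $L=[s=v_0,v_1,\dots,v_k]$ be the ordered list of light vertices on the root-to-$v$ tree path $\pi(s,v,T)$; the compressed path $\pi^*(s,v,T)$ consists of $L$ together with a table mapping each $v_i$ to the number of heavy vertices strictly between $v_i$ and $v_{i+1}$ on $\pi(s,v,T)$, where $v_{k+1}:=v$. *)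

From mathcomp Require Import all_boot.
Set Implicit Arguments. Unset Strict Implicit. Unset Printing Implicit Defensive.

Section Tree.
Variable n : nat.
Variable adj : rel 'I_n.
Variable VT : {set 'I_n}.
Variable p : 'I_n -> 'I_n.
Variable s : 'I_n.

Definition is_rooted_tree : Prop :=
  [/\ s \in VT, p s = s &
      forall v, v \in VT -> v != s ->
        [/\ p v \in VT, adj v (p v) & exists k, iter k p v = s]].

Definition anc (v u : 'I_n) : bool := [exists k : 'I_n, iter k p u == v].
Definition subtree (v : 'I_n) : {set 'I_n} := [set u in VT | anc v u].
Definition children (v : 'I_n) : {set 'I_n} :=
  [set u in VT | (u != s) && (p u == v)].

Definition heavy_choice (hc : 'I_n -> 'I_n) : Prop :=
  forall v, v \in VT -> children v != set0 ->
    hc v \in children v /\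
    forall u, u \in children v -> #|subtree u| <= #|subtree (hc v)|.

Variable hc : 'I_n -> 'I_n.
Definition heavy (v : 'I_n) : bool := [&& v \in VT, v != s & hc (p v) == v].
Definition light (v : 'I_n) : bool := (v \in VT) && ~~ heavy v.

Definition depth (v : 'I_n) : nat := count (fun k => iter k p v != s) (iota 0 n).
Definition rpath (v : 'I_n) : seq 'I_n := rev (traject p v (depth v).+1).

(* compressed path pi*(s,v,T): list of (ID of v_i, number of heavy vertices
   strictly between v_i and v_{i+1} on the path), with v_{k+1} := v *)
Definition compressed (ID : 'I_n -> nat) (v : 'I_n) : seq (nat * nat) :=
  let P := rpath v in
  let L := [seq u <- P | light u] in
  [seq (ID (nth v L i),
        count heavy (take (index (nth v L i.+1) P - index (nth v L i) P).-1
                          (drop (index (nth v L i) P).+1 P)))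
  | i <- iota 0 (size L)].

Definition tadj (u w : 'I_n) : bool :=
  [&& u \in VT, w \in VT, u != w & (p u == w) || (p w == u)].
Definition ball (u : 'I_n) (k : nat) : {set 'I_n} :=
  iter k (fun S => S :|: [set w | [exists x in S, tadj x w]]) [set u].
Definition diam : nat :=
  find (fun k => [forall u in VT, forall w in VT, w \in ball u k]) (iota 0 n).
End Tree.

Record LocalInput := {
  li_n : nat; li_id : nat; li_nbrs : seq nat;
  li_inT : bool; li_parent : option nat; li_children : seq nat }.

(* output: (is v heavy?, compressed path pi*(s,v,T) with vertices as IDs);
   None means "not yet terminated" *)
Definition Output := (bool * seq (nat * nat))%type.

(* a deterministic synchronous message-passing algorithm with arbitrary
   local computation; messages are bit strings, addressed by neighbour ID *)
Record Alg := {
  St : Type;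
  a_init : LocalInput -> St;
  a_send : St -> nat -> option (seq bool);
  a_recv : St -> (nat -> option (seq bool)) -> St;
  a_out : St -> option Output }.

Definition local_input n (adj : rel 'I_n) (ID : 'I_n -> nat) (VT : {set 'I_n})
  (p : 'I_n -> 'I_n) (s : 'I_n) (v : 'I_n) : LocalInput :=
  {| li_n := n; li_id := ID v;
     li_nbrs := [seq ID u | u <- enum [set u | adj v u]];
     li_inT := v \in VT;
     li_parent := if (v \in VT) && (v != s) then Some (ID (p v)) else None;
     li_children := [seq ID u | u <- enum (children VT p s v)] |}.

Fixpoint exec (A : Alg) n (adj : rel 'I_n) (ID : 'I_n -> nat)
    (loc : 'I_n -> LocalInput) (r : nat) : 'I_n -> St A :=
  match r with
  | 0 => fun v => @a_init A (loc v)
  | r'.+1 =>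
      let st := exec A adj ID loc r' in
      fun v => @a_recv A (st v)
        (fun j => match [pick u | adj u v && (ID u == j)] with
                  | Some u => @a_send A (st u) (ID v)
                  | None => None
                  end)
  end.

Definition lg (n : nat) : nat := (trunc_log 2 n).+1.

From Pilot Require Import Defs.
From mathcomp Require Import all_boot zify.
Set Implicit Arguments. Unset Strict Implicit. Unset Printing Implicit Defensive.

(* Two waves along the tree. First a convergecast: a vertex u sends |T_u| to its parent in
   round height(u), the first round in which all its children have reported, so every vertex
   learns the subtree sizes of its children and hence its heavy child. Then the compressed
   paths flow down: a vertex u that knows pi*(s,u,T) streams it to each child, one entry per
   round and with the last counter increased by one when u is heavy, together with the flag
   telling the child whether it is heavy; a light child appends itself as a new entry.
   A light vertex has at most half the subtree of its parent, so compressed paths have at most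
   lg n entries. Hence u starts streaming by round height(s) + depth(u) lg n <= D(T)(1 + lg n),
   each edge carries at most lg n + 1 messages in each direction, and a message holds O(1)
   numbers below n^cid, i.e. O(log n) bits. *)


Fixpoint bits (w x : nat) : seq bool :=
  if w is w'.+1 then odd x :: bits w' x./2 else [::].

Definition nat_of_bits (m : seq bool) : nat :=
  foldr (fun (b : bool) acc => b + acc.*2) 0 m.

Lemma size_bits w x : size (bits w x) = w.
Proof. by elim: w x => //= w IH x; rewrite IH. Qed.

Lemma bitsK w x : x < 2 ^ w -> nat_of_bits (bits w x) = x.
Proof.
elim: w x => [|w IH] x /=; first by rewrite expn0 ltnS leqn0 => /eqP.
move=> ltx; rewrite -/(nat_of_bits _) IH ?odd_double_half //.
by rewrite ltn_half_double -mul2n -expnS.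
Qed.

Section ArgMax.
Variables (T : eqType) (f : T -> nat).

Definition argmax_step (x y : T) := if f x < f y then y else x.
Definition argmax (x0 : T) (s : seq T) := foldl argmax_step (head x0 s) s.

Lemma foldl_argmax_mem x s : foldl argmax_step x s \in x :: s.
Proof.
elim: s x => [|y s IH] x /=; first exact: mem_head.
have := IH (argmax_step x y); rewrite /argmax_step !inE.
by case: ifP => _ /orP [->|->]; rewrite ?orbT.
Qed.

Lemma foldl_argmax_max x s y : y \in x :: s -> f y <= f (foldl argmax_step x s).
Proof.
elim: s x y => [|z s IH] x y; first by rewrite inE => /eqP ->.
have step_ge : f x <= f (argmax_step x z) /\ f z <= f (argmax_step x z).
  by rewrite /argmax_step; case: ltnP => // /ltnW.
rewrite /= !inE => /or3P [/eqP ->|/eqP ->|ys].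
- exact: leq_trans step_ge.1 (IH _ _ (mem_head _ s)).
- exact: leq_trans step_ge.2 (IH _ _ (mem_head _ s)).
- by apply: IH; rewrite inE ys orbT.
Qed.

Lemma argmax_mem x0 s : s != [::] -> argmax x0 s \in s.
Proof.
case: s => // x s _; rewrite /argmax [head _ _]/=.
by have := foldl_argmax_mem x (x :: s); rewrite inE => /orP [/eqP ->|]; rewrite ?mem_head.
Qed.

Lemma argmax_max x0 s y : y \in s -> f y <= f (argmax x0 s).
Proof. by case: s => // x s ys; apply: foldl_argmax_max; rewrite inE ys orbT. Qed.

End ArgMax.

Lemma argmax_map (T U : eqType) (f : T -> nat) (h : U -> nat) (g : U -> T) y0 s :
  {in s, forall u, f (g u) = h u} -> argmax f (g y0) (map g s) = g (argmax h y0 s).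
Proof.
case: s => // u s fgh; rewrite /argmax /=.
suff foldl_g t x : {subset x :: t <= u :: s} ->
    foldl (argmax_step f) (g x) (map g t) = g (foldl (argmax_step h) x t).
  rewrite /argmax_step !ltnn; apply: foldl_g => y.
  by rewrite inE => /orP [/eqP ->|] //; apply: mem_head.
elim: t x => [|y t IH] x //= sub.
have step_g : argmax_step f (g x) (g y) = g (argmax_step h x y).
  by rewrite /argmax_step !fgh ?(fun_if g) //; apply: sub; rewrite !inE eqxx ?orbT.
rewrite step_g IH // => z; rewrite inE => /orP [/eqP ->|zt].
  by rewrite /argmax_step; case: ifP => _; apply: sub; rewrite !inE eqxx ?orbT.
by apply: sub; rewrite !inE zt !orbT.
Qed.

Definition bump_last (l : seq (nat * nat)) (b : bool) :=
  if l is e :: l' then rcons (belast e l') ((last e l').1, (last e l').2 + b) else [::].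

Lemma bump_last_rcons l e b : bump_last (rcons l e) b = rcons l (e.1, e.2 + b).
Proof. by case: l => [|x l] //=; rewrite belast_rcons last_rcons. Qed.

Lemma size_bump_last l b : size (bump_last l b) = size l.
Proof. by case: l => //= e l; rewrite size_rcons size_belast. Qed.

Lemma bump_last_mem l b e : e \in bump_last l b ->
  exists2 e', e' \in l & e.1 = e'.1 /\ e.2 <= e'.2 + b.
Proof.
case/lastP: l => [|l x] //; rewrite bump_last_rcons mem_rcons inE => /orP [/eqP ->|el].
  by exists x; rewrite ?mem_rcons ?mem_head.
by exists e; rewrite ?mem_rcons ?inE ?el ?orbT ?leq_addr.
Qed.

Lemma find_iota_first (P : pred nat) a r :
  (forall k, k < a -> ~~ P k) -> P a -> find P (iota 0 r) = minn a r.
Proof.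
move=> before Pa.
have noP m : m <= a -> ~~ has P (iota 0 m).
  by move=> le; apply/hasPn => k; rewrite mem_iota => /andP [_ lt]; apply: before; lia.
case: (leqP r a) => [ra|ar]; first by rewrite hasNfind ?noP ?size_iota.
have [k ->] : exists k, r = a + k.+1 by exists (r - a).-1; lia.
by rewrite iotaD find_cat (negbTE (noP a _)) // size_iota add0n /= Pa addn0.
Qed.

Lemma pmap_window (U : Type) (F : nat -> U) a m r :
  pmap (fun k => if (a <= k) && (k < a + m) then Some (F (k - a)) else None) (iota 0 r)
  = mkseq F (minn (r - a) m).
Proof.
elim: r => [|r IH]; first by rewrite sub0n min0n.
rewrite -addn1 iotaD pmap_cat IH /= add0n.
case: (boolP ((a <= r) && (r < a + m))) => /= [/andP [ar rm]|out].
  rewrite (_ : minn (r + 1 - a) m = minn (r - a) m + 1); last lia.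
  by rewrite /mkseq iotaD map_cat /= add0n; congr (_ ++ [:: F _]); lia.
by rewrite cats0; congr mkseq; lia.
Qed.

Lemma sum_window a m R : \sum_(r < R) ((a <= r) && (r < a + m)) <= m.
Proof.
suff -> : \sum_(r < R) ((a <= r) && (r < a + m)) = minn R (a + m) - a by lia.
elim: R => [|R IH]; first by rewrite big_ord0 min0n sub0n.
by rewrite big_ord_recr /= IH; case: (boolP ((a <= R) && (R < a + m))) => /= [/andP []|]; lia.
Qed.

Section CompressedPath.
Variables (T : eqType) (light heavy : pred T) (ID : T -> nat).

Definition between (P : seq T) (a b : T) :=
  take (index b P - index a P).-1 (drop (index a P).+1 P).

Definition cpath_entry (P : seq T) (v : T) (i : nat) :=
  let L := [seq u <- P | light u] in
  (ID (nth v L i), count heavy (between P (nth v L i) (nth v L i.+1))).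

(* [Defs.compressed v] unfolds to [cpath light heavy ID (rpath v) v]. *)
Definition cpath (P : seq T) (v : T) :=
  map (cpath_entry P v) (iota 0 (size [seq u <- P | light u])).

Lemma index_rcons_mem (P : seq T) x a : a \in P -> index a (rcons P x) = index a P.
Proof. by move=> aP; rewrite -cats1 index_cat aP. Qed.

Lemma between_rcons P x a b : a \in P -> b \in P -> between (rcons P x) a b = between P a b.
Proof.
move=> aP bP; have := index_mem a P; have := index_mem b P; rewrite aP bP => ltb lta.
rewrite /between !index_rcons_mem // drop_rcons // -cats1 takel_cat // size_drop; lia.
Qed.

Lemma between_last P x a : a \in P -> x \notin P ->
  between (rcons P x) a x = drop (index a P).+1 P.
Proof.
move=> aP xP; have := index_mem a P; rewrite aP => lta.
rewrite /between (index_rcons_mem _ aP).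
have -> : index x (rcons P x) = size P by rewrite -cats1 index_cat (negbTE xP) /= eqxx addn0.
rewrite drop_rcons // -cats1 take_size_cat // size_drop; lia.
Qed.

Section Extension.
Variables (Q : seq T) (q x : T).
Hypotheses (qQ : q \notin Q) (xQq : x \notin rcons Q q) (light_q : light q -> ~~ heavy q).

Let P := rcons Q q.
Let L := [seq u <- P | light u].
Let L' := [seq u <- rcons P x | light u].

Lemma nth_filter_rcons_lt i : i < size L -> nth x L' i = nth q L i.
Proof.
by move=> iL; rewrite /L' filter_rcons -/L; case: ifP => _;
  rewrite ?nth_rcons ?iL; apply: set_nth_default.
Qed.

Lemma nth_filter_rcons_ge i : size L <= i -> nth x L' i = x.
Proof.
rewrite /L' filter_rcons -/L => iL; case: ifP => _; last by rewrite nth_default.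
by rewrite nth_rcons ltnNge iL /=; case: eqP => // _; rewrite nth_default // size_rcons.
Qed.

Lemma mem_nth_light i : i < size L -> nth q L i \in P.
Proof. by move=> iL; have := mem_nth q iL; rewrite mem_filter => /andP []. Qed.

Lemma cpath_entry_inner i : i.+1 < size L -> cpath_entry (rcons P x) x i = cpath_entry P q i.
Proof.
move=> iL; have iL' := ltnW iL.
by rewrite /cpath_entry -/L -/L' !nth_filter_rcons_lt // between_rcons // mem_nth_light.
Qed.

Lemma cpath_entry_last i : i.+1 = size L ->
  cpath_entry (rcons P x) x i = ((cpath_entry P q i).1, (cpath_entry P q i).2 + heavy q).
Proof.
move=> iL; rewrite /cpath_entry -/L -/L' nth_filter_rcons_lt ?iL //.
rewrite nth_filter_rcons_ge // (nth_default q (leqnn _)) /=; congr pair.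
set a := nth q L i; have iL' : i < size L by rewrite -iL.
have aP : a \in P by apply: mem_nth_light.
rewrite between_last //; case: (eqVneq a q) => [aq|naq].
  have /light_q/negbTE -> : light q.
    by rewrite -aq; have := mem_nth q iL'; rewrite mem_filter => /andP [].
  rewrite aq /between subnn take0 /= addn0 drop_oversize // /P -cats1 index_cat (negbTE qQ).
  by rewrite /= eqxx size_cat /= addn0 addn1.
have aQ : a \in Q by move: aP; rewrite /P mem_rcons inE (negbTE naq).
rewrite between_last // /P index_rcons_mem // drop_rcons; last by rewrite index_mem.
by rewrite -cats1 count_cat /= addn0.
Qed.

Lemma cpath_entry_new : cpath_entry (rcons P x) x (size L) = (ID x, 0).
Proof. by rewrite /cpath_entry -/L' !nth_filter_rcons_ge // /between subnn take0. Qed.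

Lemma cpath_rcons :
  cpath (rcons P x) x =
  bump_last (cpath P q) (heavy q) ++ (if light x then [:: (ID x, 0)] else [::]).
Proof.
rewrite /cpath -/L -/L'.
have -> : size L' = size L + light x.
  by rewrite /L' filter_rcons; case: ifP => _ /=; rewrite ?size_rcons ?addn1 ?addn0.
rewrite iotaD map_cat add0n; congr (_ ++ _); last first.
  by case: ifP => /=; rewrite ?cpath_entry_new.
case E: (size L) => [|k] //.
rewrite -addn1 iotaD !map_cat /= add0n !cats1 bump_last_rcons cpath_entry_last ?E ?addn1 //.
congr rcons; apply/eq_in_map => i; rewrite mem_iota => /andP [_ ik].
by apply: cpath_entry_inner; rewrite E ltnS.
Qed.

End Extension.
End CompressedPath.

Section RootedTree.
Variables (n : nat) (adj : rel 'I_n) (VT : {set 'I_n}) (p : 'I_n -> 'I_n) (s : 'I_n).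
Hypothesis tree : is_rooted_tree adj VT p s.

Local Notation depth := (depth p s).
Local Notation subtree := (subtree VT p).
Local Notation children := (children VT p s).

Lemma root_in_tree : s \in VT. Proof. by case: tree. Qed.

Lemma parent_root : p s = s. Proof. by case: tree. Qed.

Lemma parent_in_tree v : v \in VT -> v != s -> p v \in VT.
Proof. by move=> vT vs; case: tree => _ _ /(_ v vT vs) []. Qed.

Lemma adj_parent v : v \in VT -> v != s -> adj v (p v).
Proof. by move=> vT vs; case: tree => _ _ /(_ v vT vs) []. Qed.

Lemma iter_root k : iter k p s = s.
Proof. by elim: k => //= k ->; rewrite parent_root. Qed.

Lemma iter_after_root v m k : iter m p v = s -> m <= k -> iter k p v = s.
Proof. by move=> hit mk; rewrite -(subnK mk) iterD hit iter_root. Qed.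

Lemma iter_in_tree k v : v \in VT -> iter k p v \in VT.
Proof.
move=> vT; elim: k => //= k IH.
by case: (eqVneq (iter k p v) s) => [->|ns]; rewrite ?parent_root ?root_in_tree ?parent_in_tree.
Qed.

Lemma first_hit_lt v m : iter m p v = s -> (forall k, k < m -> iter k p v != s) -> m < n.
Proof.
move=> hit before.
have noloop i j : i < j <= m -> iter i p v != iter j p v.
  case/andP=> ij jm; apply/eqP => eq_ij.
  have /negP[] := before (m - j + i) (ltac:(lia)).
  by rewrite iterD eq_ij -iterD subnK // hit.
suff /leq_card : injective (fun i : 'I_m.+1 => iter i p v) by rewrite !card_ord.
move=> i j eq_ij; apply/val_inj; case: (ltngtP i j) => // [ij|ji].
  by have := noloop i j; rewrite eq_ij eqxx ij -ltnS ltn_ord => /(_ isT).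
by have := noloop j i; rewrite eq_ij eqxx ji -ltnS ltn_ord => /(_ isT).
Qed.

(* [Defs.depth] only inspects the first [n] iterates; by [first_hit_lt] that suffices. *)
Lemma depthE v m : iter m p v = s -> (forall k, k < m -> iter k p v != s) -> depth v = m.
Proof.
move=> hit before; have mn := first_hit_lt hit before.
rewrite /Defs.depth (eq_in_count (a2 := gtn m)) => [|k _]; last first.
  by rewrite /=; case: (ltnP k m) => [/before -> //|mk]; rewrite (iter_after_root hit mk) eqxx.
rewrite -(subnKC (ltnW mn)) iotaD count_cat add0n (eq_in_count (a2 := predT)) => [|k].
  by rewrite count_predT size_iota (eq_in_count (a2 := pred0)) ?count_pred0 ?addn0 //;
    move=> k; rewrite mem_iota => /andP [mk _] /=; rewrite ltnNge mk.
by rewrite mem_iota.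
Qed.

Lemma depth_first_hit v : v \in VT ->
  iter (depth v) p v = s /\ forall k, k < depth v -> iter k p v != s.
Proof.
move=> vT; have reach : exists k, iter k p v == s.
  case: (eqVneq v s) => [->|vs]; first by exists 0.
  by case: tree => _ _ /(_ v vT vs) [_ _ [k /eqP]]; exists k.
case: (ex_minnP reach) => m /eqP hit min_m.
have before k : k < m -> iter k p v != s.
  by move=> km; apply/negP => /min_m; rewrite leqNgt km.
by rewrite (depthE hit before).
Qed.

Lemma depth_lt v : v \in VT -> depth v < n.
Proof. by case/depth_first_hit; apply: first_hit_lt. Qed.

Lemma depth_root : depth s = 0.
Proof. exact: depthE. Qed.

Lemma depth_iter v k : v \in VT -> k <= depth v -> depth (iter k p v) = depth v - k.
Proof.
case/depth_first_hit=> hit before kv; apply: depthE; first by rewrite -iterD subnK.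
by move=> j jv; rewrite -iterD; apply: before; lia.
Qed.

Lemma depth_parent v : v \in VT -> v != s -> depth v = (depth (p v)).+1.
Proof.
move=> vT vs; have dv0 : 0 < depth v.
  by rewrite lt0n; apply: contra_neq vs => dv0; have [] := depth_first_hit vT; rewrite dv0.
by have := depth_iter vT dv0; rewrite subn1 /= => ->; rewrite prednK.
Qed.

Lemma tree_ind (P : 'I_n -> Prop) :
  P s -> (forall v, v \in VT -> v != s -> P (p v) -> P v) -> forall v, v \in VT -> P v.
Proof.
move=> Ps Pp; suff H d v : v \in VT -> depth v = d -> P v by move=> v vT; exact: H _ v vT erefl.
elim: d v => [|d IH] v vT dv; case: (eqVneq v s) => [->|vs] //.
  by move: dv; rewrite depth_parent.
by apply: Pp => //; apply: IH; [apply: parent_in_tree | move: dv; rewrite depth_parent // => -[]].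
Qed.

Lemma mem_subtree v x : x \in VT ->
  (x \in subtree v) = (depth v <= depth x) && (iter (depth x - depth v) p x == v).
Proof.
move=> xT; have [hit _] := depth_first_hit xT.
rewrite /Defs.subtree inE xT /anc; apply/existsP/andP => [[k /eqP xv]|[vx /eqP xv]].
  case: (leqP k (depth x)) => kx.
    have := depth_iter xT kx; rewrite xv => ->.
    by rewrite subKn // leq_subr xv.
  have vs : v = s by rewrite -xv (iter_after_root hit (ltnW kx)).
  by rewrite vs depth_root subn0 hit.
have lt_n : depth x - depth v < n by apply: leq_ltn_trans (leq_subr _ _) (depth_lt xT).
by exists (Ordinal lt_n); rewrite /= xv.
Qed.

Lemma subtree_in_tree v x : x \in subtree v -> x \in VT.
Proof. by rewrite inE => /andP []. Qed.

Lemma self_subtree v : v \in VT -> v \in subtree v.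
Proof. by move=> vT; rewrite mem_subtree // subnn leqnn eqxx. Qed.

Lemma child_facts c u : c \in children u ->
  [/\ c \in VT, c != s, p c = u, u \in VT & depth c = (depth u).+1].
Proof.
rewrite inE => /and3P [cT cs /eqP <-].
by split; rewrite 1?parent_in_tree // depth_parent.
Qed.

Lemma children_parent v : v \in VT -> v != s -> v \in children (p v).
Proof. by move=> vT vs; rewrite inE vT vs eqxx. Qed.

Lemma subtree_child c u x : c \in children u -> x \in subtree c -> (x \in subtree u) && (x != u).
Proof.
case/child_facts=> cT _ <- _ dc xc; have xT := subtree_in_tree xc.
move: xc; rewrite !mem_subtree // => /andP [cx /eqP xc].
have -> : depth x - depth (p c) = (depth x - depth c).+1 by rewrite dc; lia.
rewrite iterS xc eqxx andbT; apply/andP; split; first by rewrite dc in cx; lia.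
by apply: contraTneq cx => ->; rewrite dc ltnn.
Qed.

Lemma subtree_child_uniq c d u x : c \in children u -> d \in children u ->
  x \in subtree c -> x \in subtree d -> c = d.
Proof.
move=> /child_facts [cT _ _ _ dc] /child_facts [dT _ _ _ dd] xc xd.
have xT := subtree_in_tree xc.
by move: xc xd; rewrite !mem_subtree // dc dd => /andP [_ /eqP <-] /andP [_ /eqP <-].
Qed.

Lemma subtree_child_exists u x : x \in subtree u -> x != u ->
  exists2 c, c \in children u & x \in subtree c.
Proof.
move=> xu nxu; have xT := subtree_in_tree xu.
move: xu; rewrite mem_subtree // => /andP [ux /eqP xu].
have lt_ux : depth u < depth x by rewrite ltn_neqAle ux andbT; apply: contra_neq nxu => E;
  rewrite -xu E subnn.
set c := iter (depth x - depth u).-1 p x.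
have dc : depth c = (depth u).+1 by rewrite depth_iter //; lia.
have pc : p c = u by rewrite -iterS prednK ?subn_gt0.
exists c; last first.
  by rewrite mem_subtree // dc (_ : depth x - _ = (depth x - depth u).-1) ?eqxx //; lia.
rewrite inE iter_in_tree // -pc eqxx andbT.
by apply/eqP => cs; move: dc; rewrite cs depth_root.
Qed.

Lemma sum_children_subtree_mem u x :
  \sum_(c in children u) (x \in subtree c) = (x \in subtree u) && (x != u).
Proof.
case: (boolP ((x \in subtree u) && (x != u))) => [/andP [xu nxu]|not_below].
  have [c cu xc] := subtree_child_exists xu nxu.
  rewrite (bigD1 c) //= xc big1 // => d /andP [du dc].
  by apply/eqP; rewrite eqb0; apply: contra dc => xd; rewrite (subtree_child_uniq du cu xd xc).
rewrite big1 // => c cu; apply/eqP; rewrite eqb0; apply: contra not_below; exact: subtree_child.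
Qed.

Lemma card_subtree u : u \in VT -> #|subtree u| = (\sum_(c in children u) #|subtree c|).+1.
Proof.
move=> uT; have card_sum (A : {set 'I_n}) : #|A| = \sum_x (x \in A).
  by rewrite -sum1_card big_mkcond; apply: eq_bigr => x _; case: (x \in A).
rewrite (cardsD1 u) self_subtree // add1n card_sum; congr _.+1.
under [RHS]eq_bigr => c _ do rewrite card_sum.
rewrite exchange_big; apply: eq_bigr => x _ /=.
by rewrite sum_children_subtree_mem in_setD1 andbC.
Qed.

Lemma subtree_child_lt u c : c \in children u -> #|subtree c| < #|subtree u|.
Proof.
move=> cu; have [_ _ _ uT _] := child_facts cu.
by rewrite (card_subtree uT) ltnS (bigD1 c) //= leq_addr.
Qed.

Lemma subtree_light_half u c d : c \in children u -> d \in children u -> c != d ->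
  #|subtree c| <= #|subtree d| -> (#|subtree c|).*2 < #|subtree u|.
Proof.
move=> cu du cd le_cd; have [_ _ _ uT _] := child_facts cu.
rewrite (card_subtree uT) ltnS (bigD1 c) //= (bigD1 d) /=; last by rewrite du eq_sym cd.
by rewrite -addnn leq_add2l (leq_trans le_cd (leq_addr _ _)).
Qed.

Fixpoint height_upto k u :=
  if k is k'.+1 then \max_(c in children u) (height_upto k' c).+1 else 0.

Definition height u := height_upto n u.

(* Depths are below [n], so fuel [n - depth u] already yields the exact height of [u]. *)
Lemma height_upto_stable j u k : u \in VT -> n - depth u <= j <= k ->
  height_upto k u = height_upto j u.
Proof.
elim: j u k => [|j IH] u k uT /andP [uj jk]; first by have := depth_lt uT; lia.
case: k jk => // k jk /=; apply: eq_bigr => c cu; congr _.+1.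
by have [cT _ _ _ dc] := child_facts cu; apply: IH => //; apply/andP; split; lia.
Qed.

Lemma heightE u : u \in VT -> height u = \max_(c in children u) (height c).+1.
Proof.
move=> uT; have n_gt0 : 0 < n by apply: leq_ltn_trans (depth_lt uT).
have -> : height u = height_upto n.-1.+1 u by rewrite prednK.
apply: eq_bigr => c cu; congr _.+1; have [cT _ _ _ dc] := child_facts cu.
by symmetry; apply: height_upto_stable => //; apply/andP; split; have := depth_lt uT; lia.
Qed.

Lemma height_child_lt c u : c \in children u -> height c < height u.
Proof.
move=> cu; have [_ _ _ uT _] := child_facts cu.
by rewrite (heightE uT); apply: (leq_bigmax_cond (F := fun c => (height c).+1)).
Qed.

Lemma height_upto_depth_le D k u : (forall v, v \in VT -> depth v <= D) -> u \in VT ->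
  height_upto k u + depth u <= D.
Proof.
move=> depth_le; elim: k u => [|k IH] u uT /=; first exact: depth_le.
rewrite -(subnK (depth_le u uT)) leq_add2r; apply/bigmax_leqP => c cu.
by have [cT _ _ _ dc] := child_facts cu; have := IH c cT; lia.
Qed.

Lemma ball_depth k w : w \in ball VT p s k -> (w \in VT) && (depth w <= k).
Proof.
elim: k w => [|k IH] w; first by rewrite inE => /eqP ->; rewrite root_in_tree depth_root.
rewrite /ball iterS -/(ball VT p s k) !inE => /orP [/IH /andP [wT dw]|].
  by rewrite wT; lia.
case/existsP=> x /andP [/IH /andP [xT dx]] /and4P [_ wT xw /orP [] /eqP pxw]; rewrite wT /=.
  have xs : x != s by apply: contra_neq xw => xs; rewrite -pxw xs parent_root.
  by move: (depth_parent xT xs); rewrite pxw; lia.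
have ws : w != s by apply: contra_neq xw => ws; rewrite -pxw ws parent_root.
by move: (depth_parent wT ws); rewrite pxw; lia.
Qed.

Lemma depth_le_diam v : v \in VT -> depth v <= diam VT p.
Proof.
move=> vT; rewrite /diam; set P := (fun k => _).
case: (boolP (has P (iota 0 n))) => [hasP|/hasNfind ->]; last by rewrite size_iota ltnW ?depth_lt.
have := nth_find 0 hasP; rewrite nth_iota ?add0n; last by move: hasP; rewrite has_find size_iota.
move=> /forallP /(_ s) /implyP /(_ root_in_tree) /forallP /(_ v) /implyP /(_ vT).
by case/ball_depth/andP.
Qed.

Lemma height_root_le_diam : height s <= diam VT p.
Proof.
by have := height_upto_depth_le n depth_le_diam root_in_tree; rewrite depth_root addn0.
Qed.

Local Notation rpath := (rpath p s).

Lemma rpath_root : rpath s = [:: s].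
Proof. by rewrite /Defs.rpath depth_root. Qed.

Lemma rpath_parent v : v \in VT -> v != s -> rpath v = rcons (rpath (p v)) v.
Proof. by move=> vT vs; rewrite /Defs.rpath (depth_parent vT vs) [traject _ _ _.+2]/= rev_cons. Qed.

Lemma rpath_depth v x : v \in VT -> x \in rpath v -> (x \in VT) && (depth x <= depth v).
Proof.
move: v; apply: tree_ind => [|v vT vs IH].
  by rewrite rpath_root inE => /eqP ->; rewrite root_in_tree leqnn.
rewrite rpath_parent // mem_rcons inE => /orP [/eqP ->|/IH /andP [-> /leq_trans]].
  by rewrite vT leqnn.
by apply; rewrite (depth_parent vT vs).
Qed.

Lemma rpath_uniq v : v \in VT -> uniq (rpath v).
Proof.
move: v; apply: tree_ind => [|v vT vs IH]; first by rewrite rpath_root.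
rewrite rpath_parent // rcons_uniq IH andbT; apply/negP => /rpath_depth.
by rewrite parent_in_tree // (depth_parent vT vs) ltnn andbF => /(_ isT).
Qed.

Section HeavyLight.
Variables (hc : 'I_n -> 'I_n) (ID : 'I_n -> nat).

Local Notation heavy := (heavy VT p s hc).
Local Notation light := (light VT p s hc).
Local Notation compressed := (compressed VT p s hc ID).

Lemma heavy_root : heavy s = false.
Proof. by rewrite /Defs.heavy eqxx andbF. Qed.

Lemma light_root : light s.
Proof. by rewrite /Defs.light root_in_tree heavy_root. Qed.

Lemma compressed_root : compressed s = [:: (ID s, 0)].
Proof. by rewrite /Defs.compressed rpath_root /= light_root. Qed.

Lemma compressed_parent v : v \in VT -> v != s ->
  compressed v = bump_last (compressed (p v)) (heavy (p v)) ++
                 (if light v then [:: (ID v, 0)] else [::]).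
Proof.
move=> vT vs; have pT := parent_in_tree vT vs.
have [Q rpQ] : exists Q, rpath (p v) = rcons Q (p v).
  case: (eqVneq (p v) s) => [->|pvs]; first by exists [::]; rewrite rpath_root.
  by exists (rpath (p (p v))); rewrite rpath_parent.
have rpv : rpath v = rcons (rcons Q (p v)) v by rewrite rpath_parent // rpQ.
have := rpath_uniq vT; rewrite rpv rcons_uniq => /andP [vQ]; rewrite rcons_uniq => /andP [pQ _].
change (cpath light heavy ID (rpath v) v =
  bump_last (cpath light heavy ID (rpath (p v)) (p v)) (heavy (p v)) ++
  (if light v then [:: (ID v, 0)] else [::])).
by rewrite rpv rpQ cpath_rcons // => /andP [].
Qed.

Lemma size_compressed v : size (compressed v) = count light (rpath v).
Proof. by rewrite size_map size_iota size_filter. Qed.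

Lemma count_light_rpath_gt0 v : v \in VT -> 0 < count light (rpath v).
Proof.
move: v; apply: tree_ind => [|v vT vs IH]; first by rewrite rpath_root /= light_root.
by rewrite (rpath_parent vT vs) -cats1 count_cat (leq_trans IH) ?leq_addr.
Qed.

Lemma compressed_entry v e : v \in VT -> e \in compressed v ->
  (exists x, e.1 = ID x) /\ e.2 <= depth v.
Proof.
move=> vT /mapP [i _ ->] /=; split; first by eexists.
apply: leq_trans (count_size _ _) _; rewrite size_take_min size_drop.
by apply: leq_trans (geq_minr _ _) _; rewrite /Defs.rpath size_rev size_traject; lia.
Qed.

Hypothesis heavy_ok : heavy_choice VT p s hc.

(* Every light vertex other than the root at least halves the subtree size. *)
Lemma count_light_rpath_bound v : v \in VT ->
  2 ^ count light (rpath v) * #|subtree v| <= (#|subtree s|).*2.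
Proof.
move: v; apply: tree_ind => [|v vT vs IH].
  by rewrite rpath_root /= light_root expn1 mul2n.
have pT := parent_in_tree vT vs; have vp := children_parent vT vs.
rewrite rpath_parent // -cats1 count_cat /= addn0; apply: leq_trans IH.
case: (boolP (light v)) => lv /=; last by rewrite addn0 leq_mul2l ltnW ?subtree_child_lt ?orbT.
have [hc_child hc_max] : _ /\ _ := heavy_ok pT (introT (set0Pn _) (ex_intro _ v vp)).
have v_hc : v != hc (p v) by move: lv; rewrite /Defs.light /Defs.heavy vT vs eq_sym.
rewrite expnD expn1 -mulnA leq_mul2l mul2n ltnW ?orbT //.
exact: subtree_light_half vp hc_child v_hc (hc_max v vp).
Qed.

Lemma count_light_rpath_le v : v \in VT -> count light (rpath v) <= lg n.
Proof.
move=> vT; have sub_gt0 : 0 < #|subtree v| by apply/card_gt0P; exists v; apply: self_subtree.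
have pow_le : 2 ^ count light (rpath v) <= n.*2.
  apply: leq_trans (leq_pmulr _ sub_gt0) _; apply: leq_trans (count_light_rpath_bound vT) _.
  by rewrite leq_double; apply: leq_trans (max_card _) _; rewrite card_ord.
have : n.*2 < 2 ^ (lg n).+1 by rewrite expnS mul2n ltn_double trunc_log_ltn.
by move/(leq_ltn_trans pow_le); rewrite ltn_exp2l.
Qed.

End HeavyLight.
End RootedTree.

Definition inbox := nat -> option (seq bool).
Definition history := seq inbox.

Definition received (h : history) k j : option (seq bool) := nth (fun _ => None) h k j.

Definition reported (h : history) i j := has (fun k => isSome (received h k j)) (iota 0 i).
Definition all_reported (li : LocalInput) h i := all (reported h i) (li_children li).
Definition child_size (h : history) j :=
  nat_of_bits (head [::] (pmap (fun k => received h k j) (iota 0 (size h)))).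
Definition local_size li h := (sumn (map (child_size h) (li_children li))).+1.
Definition local_heavy_child li h := argmax (child_size h) (li_id li) (li_children li).

Definition is_root (li : LocalInput) := li_parent li == None.
Definition parent_id (li : LocalInput) := odflt 0 (li_parent li).
Definition parent_msgs li (h : history) :=
  pmap (fun k => received h k (parent_id li)) (iota 0 (size h)).

Definition down_msg W (hb lf : bool) (e : nat * nat) := hb :: lf :: bits W e.1 ++ bits W e.2.
Definition heavy_flag (m : seq bool) := nth false m 0.
Definition last_flag (m : seq bool) := nth false m 1.
Definition msg_entry W (m : seq bool) :=
  (nat_of_bits (take W (drop 2 m)), nat_of_bits (drop W (drop 2 m))).

Lemma msg_entryK W hb lf e : e.1 < 2 ^ W -> e.2 < 2 ^ W -> msg_entry W (down_msg W hb lf e) = e.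
Proof.
case: e => a b /= ha hb'; rewrite /msg_entry /down_msg /= drop0.
by rewrite take_size_cat ?size_bits // drop_size_cat ?size_bits // !bitsK.
Qed.

Lemma size_down_msg W hb lf e : size (down_msg W hb lf e) = (W + W).+2.
Proof. by rewrite /down_msg /= size_cat !size_bits. Qed.

Definition informed li h := has last_flag (parent_msgs li h).
Definition start_round li (h : history) :=
  if is_root li then find (all_reported li h) (iota 0 (size h).+1)
  else (find (fun k => if received h k (parent_id li) is Some m then last_flag m else false)
             (iota 0 (size h))).+1.
Definition local_heavy li h :=
  if is_root li then false else heavy_flag (head [::] (parent_msgs li h)).
Definition local_cpath W li h :=
  if is_root li then [:: (li_id li, 0)]
  else map (msg_entry W) (parent_msgs li h) ++
       (if local_heavy li h then [::] else [:: (li_id li, 0)]).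
Definition forwarded W li h := bump_last (local_cpath W li h) (local_heavy li h).
Definition width cid (li : LocalInput) := cid.+1 * lg (li_n li).

Definition hl_send cid (st : LocalInput * history) (j : nat) : option (seq bool) :=
  let: (li, h) := st in
  let r := size h in
  let W := width cid li in
  let Y := forwarded W li h in
  let t := start_round li h in
  if ~~ li_inT li then None
  else if (li_parent li == Some j) && all_reported li h r &&
          ((r == 0) || ~~ all_reported li h r.-1)
  then Some (bits W (local_size li h))
  else if [&& j \in li_children li, t <= r & r < t + size Y]
  then Some (down_msg W (j == local_heavy_child li h) (r - t == (size Y).-1) (nth (0, 0) Y (r - t)))
  else None.

Definition hl_output cid (st : LocalInput * history) : option Output :=
  let: (li, h) := st in
  if li_inT li && (is_root li || informed li h)
  then Some (local_heavy li h, local_cpath (width cid li) li h) else None.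

Definition heavy_light_alg cid : Alg :=
  {| St := LocalInput * history;
     a_init := fun li => (li, [::]);
     a_send := hl_send cid;
     a_recv := fun st f => (st.1, rcons st.2 f);
     a_out := hl_output cid |}.

Section Correctness.
Variables (cid n : nat) (adj : rel 'I_n) (ID : 'I_n -> nat) (VT : {set 'I_n})
          (p : 'I_n -> 'I_n) (s : 'I_n).
Hypotheses (ID_inj : injective ID) (ID_lt : forall v, ID v < n ^ cid).
Hypothesis tree : is_rooted_tree adj VT p s.

Local Notation depth := (depth p s).
Local Notation subtree := (subtree VT p).
Local Notation children := (children VT p s).
Local Notation rpath := (rpath p s).
Local Notation height := (height VT p s).

Definition subtree_size u := #|subtree u|.
Definition heavy_child u := argmax subtree_size u (enum (children u)).

Local Notation heavy := (heavy VT p s heavy_child).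
Local Notation light := (light VT p s heavy_child).
Local Notation compressed := (compressed VT p s heavy_child ID).

Definition forward u := bump_last (compressed u) (heavy u).

(* The round from which [u] streams [forward u]: the root once the convergecast is over,
   any other vertex right after its parent has streamed [forward (p u)]. *)
Fixpoint start_upto k u :=
  if k is k'.+1 then start_upto k' (p u) + size (forward (p u)) else height s.
Definition start u := start_upto (depth u) u.

Definition word := cid.+1 * lg n.
Definition loc := local_input adj ID VT p s.

Definition scheduled_msg r u w : option (seq bool) :=
  if [&& u \in VT, u != s, w == p u & r == height u] then Some (bits word (subtree_size u))
  else if [&& w \in children u, start u <= r & r < start u + size (forward u)]
  then Some (down_msg word (heavy_child u == w) (r - start u == (size (forward u)).-1)
                     (nth (0, 0) (forward u) (r - start u)))
  else None.

Lemma heavy_child_choice : heavy_choice VT p s heavy_child.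
Proof.
move=> v vT /set0Pn [c cv]; have enum_ne : enum (children v) != [::].
  by apply: contraTneq cv => E; rewrite -mem_enum E.
split; first by rewrite -mem_enum argmax_mem.
by move=> u uv; apply: (@argmax_max _ subtree_size); rewrite mem_enum.
Qed.

Lemma n_lt_pow_W : n < 2 ^ word.
Proof.
apply: leq_trans (trunc_log_ltn _ (isT : 1 < 2)) _.
by rewrite leq_exp2l // /word /lg mulSn leq_addr.
Qed.

Lemma ID_lt_pow_W v : ID v < 2 ^ word.
Proof.
apply: leq_trans (ID_lt v) _; rewrite /word mulnC expnM.
apply: (@leq_trans ((2 ^ lg n) ^ cid)); last by rewrite leq_pexp2l ?expn_gt0.
case: (posnP cid) => [->|cid_gt0] //.
by rewrite leq_exp2r // ltnW // trunc_log_ltn.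
Qed.

Lemma size_forward v : size (forward v) = count light (rpath v).
Proof. by rewrite size_bump_last size_compressed. Qed.

Lemma forward_gt0 v : v \in VT -> 0 < size (forward v).
Proof. by rewrite size_forward; apply: (count_light_rpath_gt0 tree). Qed.

Lemma forward_le v : v \in VT -> size (forward v) <= lg n.
Proof. by rewrite size_forward; apply: (count_light_rpath_le tree heavy_child_choice). Qed.

Lemma forward_entry_lt v e : v \in VT -> e \in forward v -> e.1 < 2 ^ word /\ e.2 < 2 ^ word.
Proof.
move=> vT /bump_last_mem [e' /(compressed_entry vT) [[x ->] e'v] [-> e2]].
split; first exact: ID_lt_pow_W.
apply: leq_ltn_trans n_lt_pow_W; apply: leq_trans e2 _.
by have := depth_lt tree vT; case: (heavy v); lia.
Qed.

Lemma start_root : start s = height s.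
Proof. by rewrite /start (depth_root tree). Qed.

Lemma start_parent v : v \in VT -> v != s -> start v = start (p v) + size (forward (p v)).
Proof. by move=> vT vs; rewrite /start (depth_parent tree vT vs). Qed.

Lemma height_le_start v : v \in VT -> height v <= start v.
Proof.
move: v; apply: (tree_ind tree) => [|v vT vs IH]; first by rewrite start_root.
rewrite start_parent //; have := height_child_lt tree (children_parent p vT vs).
by have := forward_gt0 (parent_in_tree tree vT vs); lia.
Qed.

Lemma start_le v : v \in VT -> start v <= height s + depth v * lg n.
Proof.
move: v; apply: (tree_ind tree) => [|v vT vs IH].
  by rewrite start_root (depth_root tree) addn0.
rewrite start_parent // (depth_parent tree vT vs) mulSn.
by have := forward_le (parent_in_tree tree vT vs); lia.
Qed.

Lemma scheduled_up c u k : c \in children u ->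
  scheduled_msg k c u = if k == height c then Some (bits word (subtree_size c)) else None.
Proof.
move=> cu; have [cT cs pc uT dc] := child_facts tree cu.
rewrite /scheduled_msg cT cs -pc eqxx /=; case: (k == height c) => //.
suff -> : (p c \in children c) = false by [].
by apply/negbTE/negP => /(child_facts tree) [_ _ _ _]; rewrite pc dc; lia.
Qed.

Definition down_entry u j :=
  down_msg word (heavy_child (p u) == u) (j == (size (forward (p u))).-1)
           (nth (0, 0) (forward (p u)) j).

Lemma scheduled_down u k : u \in VT -> u != s ->
  scheduled_msg k (p u) u = if (start (p u) <= k) && (k < start (p u) + size (forward (p u)))
                   then Some (down_entry u (k - start (p u))) else None.
Proof.
move=> uT us; rewrite /scheduled_msg children_parent //.
suff -> : (u == p (p u)) = false by rewrite !andbF.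
have pT := parent_in_tree tree uT us.
apply/negbTE/negP => /eqP upp; have pus : p u != s.
  by apply: contra_neq us => pus; rewrite upp pus (parent_root tree).
by have := depth_parent tree uT us; have := depth_parent tree pT pus; rewrite -upp; lia.
Qed.

Definition state_inv r v (st : LocalInput * history) :=
  [/\ st.1 = loc v, size st.2 = r &
      forall k u, k < r -> adj u v -> received st.2 k (ID u) = scheduled_msg k u v].

Hypothesis adj_sym : symmetric adj.

Lemma adj_child c u : c \in children u -> adj c u.
Proof. by case/(child_facts tree)=> cT cs <- _ _; apply: (adj_parent tree). Qed.

Lemma width_loc v : width cid (loc v) = word. Proof. by []. Qed.

Section LocalView.
Variables (r : nat) (u : 'I_n) (h : history).
Hypotheses (uT : u \in VT) (inv : state_inv r u (loc u, h)).

Lemma size_history : size h = r. Proof. by case: inv. Qed.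

Lemma received_child c k : c \in children u -> k < r ->
  received h k (ID c) = if k == height c then Some (bits word (subtree_size c)) else None.
Proof. by case: inv => _ _ rec cu kr; rewrite rec ?scheduled_up ?adj_child. Qed.

Lemma all_reportedE i : i <= r -> all_reported (loc u) h i = (height u <= i).
Proof.
move=> ir; rewrite /all_reported /= all_map.
rewrite (eq_in_all (a2 := fun c => height c < i)) => [|c]; last first.
  rewrite mem_enum => cu /=; rewrite /reported (eq_in_has (a2 := pred1 (height c))).
    by rewrite has_pred1 mem_iota.
  by move=> k; rewrite mem_iota add0n => /andP [_ ki]; rewrite received_child //=;
    [case: (k == height c) | lia].
rewrite (heightE tree uT); apply/allP/bigmax_leqP => [lt_i c cu|lt_i c].
  by apply: lt_i; rewrite mem_enum.
by rewrite mem_enum => /lt_i.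
Qed.

Lemma child_sizeE c : c \in children u -> height c < r -> child_size h (ID c) = subtree_size c.
Proof.
move=> cu cr; pose msg := bits word (subtree_size c).
have window : {in iota 0 r, (fun k => received h k (ID c)) =1 fun k =>
    if (height c <= k) && (k < height c + 1) then Some ((fun=> msg) (k - height c)) else None}.
  move=> k; rewrite mem_iota => /andP [_ kr]; rewrite received_child //.
  by have -> : (height c <= k) && (k < height c + 1) = (k == height c) by apply/andP/eqP; lia.
rewrite /child_size size_history (eq_in_pmap window) (pmap_window (fun=> msg)).
rewrite (_ : minn _ 1 = 1); last lia.
change (nat_of_bits msg = subtree_size c); rewrite bitsK //; apply: leq_ltn_trans _ n_lt_pow_W.
by apply: leq_trans (max_card _) _; rewrite card_ord.
Qed.

Lemma height_child_le c : c \in children u -> height u <= r -> height c < r.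
Proof. by move=> cu; apply: leq_trans (height_child_lt tree cu). Qed.

Lemma local_sizeE : height u <= r -> local_size (loc u) h = subtree_size u.
Proof.
move=> ur; rewrite /local_size /= -map_comp.
have -> : map (child_size h \o ID) (enum (children u)) = map subtree_size (enum (children u)).
  by apply/eq_in_map => c; rewrite mem_enum => cu /=; rewrite child_sizeE // height_child_le.
by rewrite sumnE big_map big_enum /subtree_size (card_subtree tree uT).
Qed.

Lemma local_heavy_childE : height u <= r -> local_heavy_child (loc u) h = ID (heavy_child u).
Proof.
move=> ur; rewrite /local_heavy_child /= (argmax_map (h := subtree_size)) // => c.
by rewrite mem_enum => cu; rewrite child_sizeE // height_child_le.
Qed.

Lemma is_rootE : is_root (loc u) = (u == s).
Proof. by rewrite /is_root /= uT /=; case: (u == s). Qed.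

Lemma start_round_root : u == s -> start_round (loc u) h = minn (height u) r.+1.
Proof.
move=> us; rewrite /start_round is_rootE us size_history.
rewrite (eq_in_find (a2 := fun i => height u <= i)) => [|i]; last first.
  by rewrite mem_iota add0n ltnS => /andP [_ ir]; apply: all_reportedE.
by apply: find_iota_first => // i; rewrite -ltnNge.
Qed.

Section NonRoot.
Hypothesis us : u != s.

Lemma parent_idE : parent_id (loc u) = ID (p u).
Proof. by rewrite /parent_id /= uT us. Qed.

Lemma received_parent k : k < r -> received h k (ID (p u)) = scheduled_msg k (p u) u.
Proof. by case: inv => _ _ rec kr; rewrite rec // adj_sym (adj_parent tree). Qed.

Lemma parent_msgsE :
  parent_msgs (loc u) h = mkseq (down_entry u) (minn (r - start (p u)) (size (forward (p u)))).
Proof.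
rewrite /parent_msgs parent_idE size_history -pmap_window; apply: eq_in_pmap => k.
by rewrite mem_iota => /andP [_ kr]; rewrite received_parent // scheduled_down.
Qed.

Lemma informedE : informed (loc u) h = (start u <= r).
Proof.
rewrite /informed parent_msgsE has_map (eq_has (a2 := pred1 (size (forward (p u))).-1)) //.
rewrite has_pred1 mem_iota (start_parent uT us) /=.
by have := forward_gt0 (parent_in_tree tree uT us); lia.
Qed.

Lemma start_round_nonroot : start_round (loc u) h = (minn (start u).-1 r).+1.
Proof.
have fw_gt0 := forward_gt0 (parent_in_tree tree uT us).
rewrite /start_round is_rootE (negbTE us) parent_idE size_history; congr _.+1.
rewrite (eq_in_find (a2 := pred1 (start u).-1)) => [|k]; last first.
  rewrite mem_iota => /andP [_ kr].
  rewrite received_parent // scheduled_down // (start_parent uT us).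
  by case: ifP => /= [/andP []|/negbT]; [move=> *; apply/eqP/eqP | rewrite negb_and -!ltnNge]; lia.
by apply: find_iota_first => [k|]; rewrite /= ?eqxx //; move=> kl; apply/eqP; lia.
Qed.

Lemma local_view_nonroot : start u <= r ->
  local_heavy (loc u) h = heavy u /\ local_cpath word (loc u) h = compressed u.
Proof.
move=> ur; have pT := parent_in_tree tree uT us; have fw_gt0 := forward_gt0 pT.
have msgs : parent_msgs (loc u) h = mkseq (down_entry u) (size (forward (p u))).
  by rewrite parent_msgsE; congr mkseq; move: ur; rewrite (start_parent uT us); lia.
have heavyE : local_heavy (loc u) h = heavy u.
  rewrite /local_heavy is_rootE (negbTE us) msgs.
  by case: (size _) fw_gt0 => //= k _; rewrite /Defs.heavy uT us.
split => //; rewrite /local_cpath is_rootE (negbTE us) heavyE msgs /mkseq -map_comp.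
rewrite (compressed_parent tree _ _ uT us) /Defs.light uT /=.
congr (_ ++ _); last by case: (heavy u).
rewrite -[RHS](mkseq_nth (0, 0)); apply/eq_in_map => j; rewrite mem_iota => /andP [_ j_lt] /=.
by have [e1 e2] := forward_entry_lt pT (mem_nth (0, 0) j_lt); rewrite msg_entryK.
Qed.

End NonRoot.

Lemma local_view : (u == s) || (start u <= r) ->
  local_heavy (loc u) h = heavy u /\ local_cpath word (loc u) h = compressed u.
Proof.
case: (eqVneq u s) => [us|us] /= ur; last exact: local_view_nonroot.
by rewrite /local_heavy /local_cpath is_rootE us eqxx (heavy_root VT) (compressed_root tree).
Qed.

Lemma start_roundE : start u <= r -> start_round (loc u) h = start u.
Proof.
move=> ur; case: (eqVneq u s) => [us|us].
  by move: ur; rewrite start_round_root ?us ?eqxx // start_root; lia.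
rewrite start_round_nonroot //; have := forward_gt0 (parent_in_tree tree uT us).
by move: ur; rewrite (start_parent uT us); lia.
Qed.

Lemma start_round_gt : r < start u -> r < start_round (loc u) h.
Proof.
move=> ru; case: (eqVneq u s) => [us|us]; last by rewrite start_round_nonroot //; lia.
by move: ru; rewrite start_round_root ?us ?eqxx // start_root; lia.
Qed.

Lemma forwardedE : start u <= r -> forwarded word (loc u) h = forward u.
Proof.
by move=> ur; rewrite /forwarded; have [|-> ->] := local_view; rewrite ?ur ?orbT.
Qed.

Lemma send_in_tree w : hl_send cid (loc u, h) (ID w) = scheduled_msg r u w.
Proof.
have first_round a : (a <= r) && ((r == 0) || ~~ (a <= r.-1)) = (r == a).
  by case: r => [|r'] /=; [rewrite leqn0 eq_sym andbT | apply/andP/eqP; lia].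
have to_parent : (li_parent (loc u) == Some (ID w)) = (u != s) && (w == p u).
  by rewrite /= uT; case: (u != s) => //; rewrite /eq_op /= (inj_eq ID_inj) eq_sym.
rewrite /hl_send; cbv beta iota zeta.
rewrite [li_inT _]/= uT [~~ true]/= width_loc size_history !all_reportedE ?leq_pred //.
rewrite to_parent -andbA first_round /scheduled_msg uT [true && _]/= -andbA.
case: ifP => [/and3P [_ _ /eqP ur]|_]; first by rewrite local_sizeE // ur.
have -> : (ID w \in li_children (loc u)) = (w \in children u) by rewrite mem_map // mem_enum.
case: (boolP (w \in children u)) => //= wu; case: (leqP (start u) r) => ur; last first.
  by rewrite leqNgt start_round_gt.
rewrite start_roundE // forwardedE // ur /= local_heavy_childE ?(inj_eq ID_inj) 1?[w == _]eq_sym //.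
exact: leq_trans (height_le_start uT) ur.
Qed.

Lemma outputE :
  hl_output cid (loc u, h) =
  if (u == s) || (start u <= r) then Some (heavy u, compressed u) else None.
Proof.
rewrite /hl_output /= uT is_rootE; case: (eqVneq u s) => [us|us] /=.
  by have [|-> ->] := local_view; rewrite ?us ?eqxx.
rewrite informedE //; case: ifP => // ur.
by have [|-> ->] := local_view; rewrite ?ur ?orbT.
Qed.

End LocalView.

Lemma send_scheduled r u h w :
  state_inv r u (loc u, h) -> hl_send cid (loc u, h) (ID w) = scheduled_msg r u w.
Proof.
move=> inv; case: (boolP (u \in VT)) => uT; first exact: send_in_tree.
rewrite /hl_send /= (negbTE uT) /scheduled_msg (negbTE uT) /=; case: ifP => // /and3P [wu _ _].
by have [_ _ _ uT' _] := child_facts tree wu; rewrite uT' in uT.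
Qed.

Lemma exec_inv r v : state_inv r v (exec (heavy_light_alg cid) adj ID loc r v).
Proof.
elim: r v => [|r IH] v; first by split.
have [st_v size_v rec_v] := IH v; split => //=; first by rewrite size_rcons size_v.
move=> k u kr uv; rewrite /received nth_rcons size_v.
case: ltnP => [kr'|rk]; first exact: rec_v k u kr' uv.
rewrite (_ : k = r) ?eqxx; last lia.
case: pickP => [u' /andP [u'v /eqP /ID_inj ->]|/(_ u)]; last by rewrite uv eqxx.
case E: (exec _ _ _ _ r u) => [li h']; have := IH u; rewrite E => inv_u.
by have [/= li_u _ _] := inv_u; move: inv_u; rewrite li_u; apply: send_scheduled.
Qed.

Lemma exec_state r v : exists h, exec (heavy_light_alg cid) adj ID loc r v = (loc v, h) /\
  state_inv r v (loc v, h).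
Proof.
case E: (exec _ _ _ _ r v) => [li h]; exists h; have := exec_inv r v.
by rewrite E; case=> /= -> *; split.
Qed.

Lemma exec_send r u w :
  @a_send (heavy_light_alg cid) (exec (heavy_light_alg cid) adj ID loc r u) (ID w) =
  scheduled_msg r u w.
Proof. by have [h [-> inv]] := exec_state r u; apply: send_scheduled. Qed.

Lemma exec_output r v : v \in VT ->
  @a_out (heavy_light_alg cid) (exec (heavy_light_alg cid) adj ID loc r v) =
  if (v == s) || (start v <= r) then Some (heavy v, compressed v) else None.
Proof. by move=> vT; have [h [-> inv]] := exec_state r v; apply: outputE. Qed.

Lemma scheduled_size r u w m : scheduled_msg r u w = Some m -> size m <= (2 * cid + 4) * lg n.
Proof.
rewrite /scheduled_msg; case: ifP => _.
  by move=> /Some_inj <-; rewrite size_bits /word leq_mul2r; lia.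
case: ifP => // _ /Some_inj <-; rewrite size_down_msg /word.
have : 0 < lg n by []; nia.
Qed.

Lemma scheduled_count R u w : \sum_(r < R) isSome (scheduled_msg r u w) <= (lg n).+1.
Proof.
pose m := if u \in VT then size (forward u) else 0.
apply: (@leq_trans (\sum_(r < R) (((height u <= r) && (r < height u + 1)) +
                                  ((start u <= r) && (r < start u + m))))).
  apply: leq_sum => r _; rewrite /scheduled_msg; case: ifP => [/and4P [_ _ _ /eqP ->]|_].
    by rewrite leqnn addn1 ltnSn.
  case: ifP => [/and3P [wu ur ru]|_] //; have [_ _ _ uT _] := child_facts tree wu.
  by rewrite /m uT /= ur ru /= addn1.
rewrite big_split -[(lg n).+1]add1n; apply: leq_add; first exact: sum_window.
by apply: leq_trans (sum_window _ _ _) _; rewrite /m; case: ifP => // /forward_le.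
Qed.

End Correctness.

Theorem lemma1p3 (cid : nat) :
  exists (A : Alg) (cb c k : nat),
  forall (n : nat) (adj : rel 'I_n) (ID : 'I_n -> nat)
         (VT : {set 'I_n}) (p : 'I_n -> 'I_n) (s : 'I_n),
    symmetric adj -> irreflexive adj ->
    injective ID -> (forall v, ID v < n ^ cid) ->
    is_rooted_tree adj VT p s ->
    let loc := local_input adj ID VT p s in
    let st := exec A adj ID loc in
    exists (R : nat) (hc : 'I_n -> 'I_n),
      [/\ R <= c * (diam VT p).+1 * lg n ^ k,
          heavy_choice VT p s hc,
          (* message size O(log n) *)
          (forall r u v m, r < R -> adj u v ->
             @a_send A (st r u) (ID v) = Some m -> size m <= cb * lg n),
          (* congestion polylog(n) *)
          (forall u v, adj u v ->
             \sum_(r < R) (isSome (@a_send A (st r u) (ID v))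
                           + isSome (@a_send A (st r v) (ID u)))
             <= c * lg n ^ k)
        & (* correct knowledge at the end, never a wrong output before *)
          forall v, v \in VT ->
            @a_out A (st R v) = Some (heavy VT p s hc v, compressed VT p s hc ID v)
            /\ forall r, r <= R ->
                 @a_out A (st r v) = None \/
                 @a_out A (st r v) = Some (heavy VT p s hc v, compressed VT p s hc ID v)].
Proof.
exists (heavy_light_alg cid), (2 * cid + 4), 4, 1.
move=> n adj ID VT p s adj_sym _ ID_inj ID_lt tree loc st.
pose R := height VT p s s + diam VT p * lg n.
have send := exec_send ID_inj ID_lt tree adj_sym.
have lg_gt0 : 0 < lg n by [].
exists R, (heavy_child VT p s); rewrite expn1; split.
- by have := height_root_le_diam tree; nia.
- exact: heavy_child_choice.
- by move=> r u v m _ _; rewrite /st send; apply: scheduled_size.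
- move=> u v _; under eq_bigr => r _ do rewrite /st !send.
  rewrite big_split; have count_uv := scheduled_count cid ID tree R.
  by apply: leq_trans (leq_add (count_uv u v) (count_uv v u)) _; lia.
- move=> v vT; have start_le_R : start ID VT p s v <= R.
    rewrite /R (leq_trans (start_le ID tree vT)) //.
    by rewrite leq_add2l leq_mul2r (depth_le_diam tree) ?orbT.
  have out := exec_output ID_inj ID_lt tree adj_sym.
  split=> [|r _]; rewrite /st out // ?start_le_R ?orbT //.
  by case: ifP; [right | left].
Qed.
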